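(* For Lebesgue-almost all $(\xi,\eta)\in\mathbb{R}^2$ one has $\lambda_{\min}(\xi,\eta)=\tfrac12$.
   Context: For real numbers $\xi,\eta$: $\lambda(\xi,\eta)$ (resp. $\widehat{\lambda}(\xi,\eta)$) is the supremum of the real $\lambda>0$ such that the system $1\le |x_0|\le X$, $\max(|x_0\xi-x_1|,|x_0\eta-x_2|)\le X^{-\lambda}$ has a solution $(x_0,x_1,x_2)\in\mathbb{Z}^3\setminus\{0\}$ for arbitrarily large $X$ (resp. for every sufficiently large $X$). For $0\le\mu<\lambda(\xi,\eta)$, $\widehat{\lambda}_\mu(\xi,\eta)$ is the supremum of the real $\lambda>0$ such that the system $1\le|x_0|\le X$, $\max(|x_0\xi-x_1|,|x_0\eta-x_2|)\le\min(X^{-\lambda},|x_0|^{-\mu})$ has a solution $(x_0,x_1,x_2)\in\mathbb{Z}^3\setminus\{0\}$ for every sufficiently large $X$ (the supremum of the empty set being $0$). The map $\mu\mapsto\widehat{\lambda}_\mu(\xi,\eta)$ is non-increasing, and $\lambda_{\min}(\xi,\eta):=\inf_{0<\mu<\lambda(\xi,\eta)}\widehat{\lambda}_\mu(\xi,\eta)=\lim_{\mu\to\lambda(\xi,\eta)^-}\widehat{\lambda}_\mu(\xi,\eta)$. *)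

From Stdlib Require Import Reals Lra ZArith Classical ClassicalEpsilon.
Open Scope R_scope.

Inductive Rbar : Type := Finite (r : R) | p_infty.

Definition Rbar_le (x y : Rbar) : Prop :=
  match x, y with
  | _, p_infty => True
  | p_infty, Finite _ => False
  | Finite a, Finite b => a <= b
  end.

Definition Rbar_lt (x y : Rbar) : Prop :=
  match x, y with
  | Finite _, p_infty => True
  | p_infty, _ => False
  | Finite a, Finite b => a < b
  end.

(** Supremum of a set of reals, with the convention sup(empty) = 0: we take
    the sup of [S ∪ {0}] (all sets used below consist of positive reals). *)
Definition with0 (S : R -> Prop) : R -> Prop := fun x => x = 0 \/ S x.

Lemma with0_ne (S : R -> Prop) : exists x, with0 S x.
Proof. exists 0; left; reflexivity. Qed.

Definition Rbar_sup0 (S : R -> Prop) : Rbar :=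
  match excluded_middle_informative (bound (with0 S)) with
  | left H => Finite (proj1_sig (completeness (with0 S) H (with0_ne S)))
  | right _ => p_infty
  end.

Definition Rbar_is_glb (P : Rbar -> Prop) (v : Rbar) : Prop :=
  (forall w, P w -> Rbar_le v w) /\
  (forall u, (forall w, P w -> Rbar_le u w) -> Rbar_le u v).

Definition dist_approx (xi eta : R) (x0 x1 x2 : Z) : R :=
  Rmax (Rabs (IZR x0 * xi - IZR x1)) (Rabs (IZR x0 * eta - IZR x2)).

Definition sys (xi eta X l : R) (x0 x1 x2 : Z) : Prop :=
  1 <= Rabs (IZR x0) <= X /\ dist_approx xi eta x0 x1 x2 <= Rpower X (- l).

Definition sys_mu (xi eta mu X l : R) (x0 x1 x2 : Z) : Prop :=
  1 <= Rabs (IZR x0) <= X /\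
  dist_approx xi eta x0 x1 x2 <= Rmin (Rpower X (- l)) (Rpower (Rabs (IZR x0)) (- mu)).

Definition lambda_set (xi eta : R) : R -> Prop := fun l =>
  0 < l /\ forall X0 : R, exists X, X0 <= X /\ exists x0 x1 x2 : Z, sys xi eta X l x0 x1 x2.

Definition lambda (xi eta : R) : Rbar := Rbar_sup0 (lambda_set xi eta).

Definition hat_lambda_mu_set (xi eta mu : R) : R -> Prop := fun l =>
  0 < l /\ exists X0 : R, forall X, X0 <= X -> exists x0 x1 x2 : Z, sys_mu xi eta mu X l x0 x1 x2.

Definition hat_lambda_mu (xi eta mu : R) : Rbar := Rbar_sup0 (hat_lambda_mu_set xi eta mu).

Definition lambda_min_is (xi eta : R) (v : Rbar) : Prop :=
  Rbar_is_glb (fun w => exists mu, 0 < mu /\ Rbar_lt (Finite mu) (lambda xi eta)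
                                   /\ w = hat_lambda_mu xi eta mu) v.

(** Lebesgue null subsets of R^2: coverable by countably many closed
    rectangles of arbitrarily small total area. *)
Definition null2 (N : R -> R -> Prop) : Prop :=
  forall eps, 0 < eps ->
  exists a b c d : nat -> R,
    (forall n, a n <= b n /\ c n <= d n) /\
    (forall x y, N x y -> exists n, a n <= x <= b n /\ c n <= y <= d n) /\
    (forall n, sum_f_R0 (fun k => (b k - a k) * (d k - c k)) n <= eps).

(* Dirichlet's pigeonhole argument gives, for every [X], a solution with [1 <= x0 <= X] and
   error at most about [X^(-1/2) <= x0^(-1/2)]; hence every pair has [hat_lambda_mu >= 1/2]
   for [mu <= 1/2], and [lambda >= 1/2]. Conversely, by a Borel-Cantelli covering the pairs
   with [lambda >= l > 1/2] form a null set: for denominators [x0] of size about [B^j], the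
   squares of side [2 x0^(-1-l)] around the points [(x1/x0, x2/x0)] with [|xi|, |eta| <= 2^j]
   have total area [O(B^3 4^-j)], which is summable in [j]. Off this null set
   [lambda = 1/2], so [hat_lambda_mu = 1/2] for every [0 < mu < 1/2] and [lambda_min = 1/2]. *)

From Stdlib Require Import Reals ZArith Lra Lia List Classical ClassicalEpsilon.
Open Scope R_scope.

Lemma Rbar_sup0_eq (S : R -> Prop) (c : R) : 0 < c ->
  (forall l, S l -> l <= c) -> (forall l, 0 < l < c -> S l) -> Rbar_sup0 S = Finite c.
Proof.
  intros Hc Hub Hin. unfold Rbar_sup0.
  destruct (excluded_middle_informative (bound (with0 S))) as [Hb|Hb].
  - destruct (completeness (with0 S) Hb (with0_ne S)) as [s [Hs_ub Hs_least]]; simpl.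
    f_equal. apply Rle_antisym.
    + apply Hs_least. intros x [->|Hx]; [lra | now apply Hub].
    + destruct (Rle_or_lt c s) as [H|H]; [exact H|].
      assert (Hs0 : 0 <= s) by (apply Hs_ub; left; reflexivity).
      assert (Hmid : S ((s + c) / 2)) by (apply Hin; lra).
      specialize (Hs_ub _ (or_intror Hmid)). lra.
  - exfalso. apply Hb. exists c. intros x [->|Hx]; [lra | now apply Hub].
Qed.

Lemma Rpower_pos x y : 0 < Rpower x y.
Proof. apply exp_pos. Qed.

Lemma Rpower_Ropp_le_base x y l : 0 < x <= y -> 0 <= l -> Rpower y (- l) <= Rpower x (- l).
Proof.
  intros Hxy Hl. rewrite !Rpower_Ropp. apply Rinv_le_contravar; [apply Rpower_pos|].
  apply Rle_Rpower_l; lra.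
Qed.

Lemma lambda_set_antimono xi eta l l' : 0 < l' <= l -> lambda_set xi eta l -> lambda_set xi eta l'.
Proof.
  intros Hl [_ H]. split; [lra|]. intros X0.
  destruct (H X0) as [X [HX [x0 [x1 [x2 [Hx0 Hd]]]]]].
  exists X. split; [exact HX|]. exists x0, x1, x2. split; [exact Hx0|].
  eapply Rle_trans; [exact Hd | apply Rle_Rpower; lra].
Qed.

Lemma hat_lambda_mu_set_lambda_set xi eta mu l :
  hat_lambda_mu_set xi eta mu l -> lambda_set xi eta l.
Proof.
  intros [Hl [X0 H]]. split; [exact Hl|]. intros X1.
  destruct (H (Rmax X0 X1) (Rmax_l _ _)) as [x0 [x1 [x2 [Hx0 Hd]]]].
  exists (Rmax X0 X1). split; [apply Rmax_r|]. exists x0, x1, x2. split; [exact Hx0|].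
  eapply Rle_trans; [exact Hd | apply Rmin_l].
Qed.

(** * Dirichlet's theorem *)

Lemma pigeonhole (m : nat) (f : nat -> nat) : (forall k, (k <= m)%nat -> (f k < m)%nat) ->
  exists i j, (i < j <= m)%nat /\ f i = f j.
Proof.
  intros Hf. apply NNPP. intros Hinj.
  assert (Hnd : NoDup (map f (seq 0 (S m)))).
  { apply NoDup_map_NoDup_ForallPairs; [|apply seq_NoDup].
    intros x y Hx Hy Hfxy. apply in_seq in Hx, Hy.
    destruct (Nat.lt_total x y) as [Hlt|[Heq|Hlt]]; [|exact Heq|];
      exfalso; apply Hinj; [exists x, y | exists y, x]; split; auto; lia. }
  assert (Hincl : incl (map f (seq 0 (S m))) (seq 0 m)).
  { intros y Hy. apply in_map_iff in Hy as [k [<- Hk]]. apply in_seq in Hk.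
    apply in_seq. specialize (Hf k ltac:(lia)). lia. }
  apply (NoDup_incl_length Hnd) in Hincl. rewrite length_map, !length_seq in Hincl. lia.
Qed.

Section Dirichlet.
Variable Q : nat.
Hypothesis HQ : (1 <= Q)%nat.

Let q := INR Q.
Let Hq : 1 <= q.
Proof. unfold q. apply (le_INR 1). exact HQ. Qed.

Definition box (z : R) (k : nat) : Z := Int_part (q * frac_part (INR k * z)).

Lemma box_spec z k :
  (0 <= box z k < Z.of_nat Q)%Z /\
  IZR (box z k) <= q * frac_part (INR k * z) < IZR (box z k) + 1.
Proof.
  unfold box. destruct (base_Int_part (q * frac_part (INR k * z))) as [H1 H2].
  destruct (base_fp (INR k * z)) as [F1 F2].
  assert (Hlt : q * frac_part (INR k * z) < q) by nra.
  split; [|lra]. split.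
  - assert (-1 < Int_part (q * frac_part (INR k * z)))%Z by (apply lt_IZR; simpl; nra). lia.
  - apply lt_IZR. rewrite <- INR_IZR_INZ. fold q. lra.
Qed.

Lemma same_box_close z i j : box z i = box z j ->
  Rabs (IZR (Z.of_nat j - Z.of_nat i) * z
        - IZR (Int_part (INR j * z) - Int_part (INR i * z))) <= / q.
Proof.
  intros Hij. rewrite !minus_IZR, <- !INR_IZR_INZ.
  replace ((INR j - INR i) * z - (IZR (Int_part (INR j * z)) - IZR (Int_part (INR i * z))))
    with (frac_part (INR j * z) - frac_part (INR i * z)) by (unfold frac_part; ring).
  destruct (box_spec z i) as [_ Hi]. destruct (box_spec z j) as [_ Hj]. rewrite Hij in Hi.
  apply Rmult_le_reg_l with q; [lra|]. rewrite Rinv_r by lra.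
  rewrite <- (Rabs_pos_eq q) by lra. rewrite <- Rabs_mult.
  apply Rlt_le, Rabs_def1; lra.
Qed.

Theorem dirichlet_simultaneous xi eta : exists x0 x1 x2 : Z,
  (1 <= x0 <= Z.of_nat (Q * Q))%Z /\ dist_approx xi eta x0 x1 x2 <= / q.
Proof.
  set (code := fun k => Z.to_nat (box xi k * Z.of_nat Q + box eta k)).
  assert (Hcode : forall k, (k <= Q * Q)%nat -> (code k < Q * Q)%nat).
  { intros k _. unfold code. destruct (box_spec xi k) as [Hx _], (box_spec eta k) as [He _].
    apply Nat2Z.inj_lt. rewrite Z2Nat.id, Nat2Z.inj_mul; nia. }
  destruct (pigeonhole _ code Hcode) as [i [j [Hij Hcij]]].
  assert (Hbox : box xi i = box xi j /\ box eta i = box eta j).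
  { unfold code in Hcij.
    destruct (box_spec xi i) as [Hxi _], (box_spec xi j) as [Hxj _],
             (box_spec eta i) as [Hei _], (box_spec eta j) as [Hej _].
    apply Z2Nat.inj in Hcij; [|nia|nia].
    assert (Hdiff : ((box xi i - box xi j) * Z.of_nat Q = box eta j - box eta i)%Z) by lia.
    assert (box xi i - box xi j = 0)%Z by nia. lia. }
  exists (Z.of_nat j - Z.of_nat i)%Z, (Int_part (INR j * xi) - Int_part (INR i * xi))%Z,
         (Int_part (INR j * eta) - Int_part (INR i * eta))%Z.
  split; [lia|]. apply Rmax_lub; apply same_box_close; tauto.
Qed.

End Dirichlet.

Lemma nat_sqrt_bracket X : 1 <= X ->
  exists Q : nat, (1 <= Q)%nat /\ INR Q ^ 2 <= X < (INR Q + 1) ^ 2.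
Proof.
  intros HX. destruct (base_Int_part (sqrt X)) as [H1 H2].
  assert (Hs1 : 1 <= sqrt X) by (rewrite <- sqrt_1; apply sqrt_le_1_alt; lra).
  assert (Hpos : (0 < Int_part (sqrt X))%Z) by (apply lt_IZR; lra).
  exists (Z.to_nat (Int_part (sqrt X))). rewrite INR_IZR_INZ, Z2Nat.id by lia.
  split; [lia|]. set (k := IZR (Int_part (sqrt X))) in *.
  pose proof (sqrt_sqrt X ltac:(lra)). split; nra.
Qed.

Lemma inv_le_Rpower_of_sqrt_bracket q X l : 0 < l < 1/2 -> 1 <= q ->
  Rpower 4 (/ (1 - 2 * l)) <= X -> X < (q + 1) ^ 2 -> / q <= Rpower X (- l).
Proof.
  intros Hl Hq Hc HXq.
  assert (HX : 0 < X) by (pose proof (Rpower_pos 4 (/ (1 - 2 * l))); lra).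
  rewrite Rpower_Ropp. apply Rinv_le_contravar; [apply Rpower_pos|].
  assert (H4 : 4 <= Rpower X (1 - 2 * l)).
  { replace 4 with (Rpower (Rpower 4 (/ (1 - 2 * l))) (1 - 2 * l))
      by (rewrite Rpower_mult, Rinv_l, Rpower_1 by lra; reflexivity).
    apply Rle_Rpower_l; [lra|]. split; [apply Rpower_pos | exact Hc]. }
  assert (Hsplit : Rpower X l * Rpower X l * Rpower X (1 - 2 * l) = X).
  { rewrite <- !Rpower_plus. replace (l + l + (1 - 2 * l)) with 1 by ring. apply Rpower_1, HX. }
  pose proof (Rpower_pos X l). set (y := Rpower X l) in *.
  assert (y * y * 4 <= X) by (rewrite <- Hsplit; apply Rmult_le_compat_l; nra).
  assert (X < 4 * (q * q)) by nra. nra.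
Qed.

Lemma inv_le_Rpower_of_le_sq q x mu : 0 < mu <= 1/2 -> 1 <= q -> 1 <= x <= q ^ 2 ->
  / q <= Rpower x (- mu).
Proof.
  intros Hmu Hq Hx.
  rewrite Rpower_Ropp. apply Rinv_le_contravar; [apply Rpower_pos|].
  apply Rle_trans with (Rpower (q ^ 2) mu); [apply Rle_Rpower_l; lra|].
  rewrite <- (Rpower_pow 2 q), Rpower_mult by lra.
  rewrite <- (Rpower_1 q) at 2 by lra. apply Rle_Rpower; [lra|]. simpl. lra.
Qed.

Lemma hat_lambda_mu_set_lt_half xi eta mu l :
  0 < mu <= 1/2 -> 0 < l < 1/2 -> hat_lambda_mu_set xi eta mu l.
Proof.
  intros Hmu Hl. split; [lra|].
  set (c := Rpower 4 (/ (1 - 2 * l))). exists (Rmax 1 c). intros X HX.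
  pose proof (Rmax_l 1 c). pose proof (Rmax_r 1 c).
  destruct (nat_sqrt_bracket X ltac:(lra)) as [Q [HQ [HQX HXQ]]].
  assert (HQR : 1 <= INR Q) by apply (le_INR 1), HQ.
  destruct (dirichlet_simultaneous Q HQ xi eta) as [x0 [x1 [x2 [Hx0 Hd]]]].
  assert (Hx0R : 1 <= IZR x0 <= INR Q ^ 2).
  { split; [apply (IZR_le 1); lia|]. rewrite INR_IZR_INZ. simpl. rewrite Rmult_1_r, <- mult_IZR.
    apply IZR_le. lia. }
  exists x0, x1, x2. unfold sys_mu. rewrite Rabs_pos_eq by lra.
  split; [lra|]. apply Rmin_glb; eapply Rle_trans; try exact Hd.
  - apply inv_le_Rpower_of_sqrt_bracket; unfold c in *; lra.
  - apply inv_le_Rpower_of_le_sq; lra.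
Qed.

Section ExponentHalf.
Variables xi eta : R.
Hypothesis lambda_set_le_half : forall l, lambda_set xi eta l -> l <= 1/2.

Lemma lambda_eq_half : lambda xi eta = Finite (1/2).
Proof.
  apply Rbar_sup0_eq; [lra | exact lambda_set_le_half|]. intros l Hl.
  apply (hat_lambda_mu_set_lambda_set _ _ (1/4)), hat_lambda_mu_set_lt_half; lra.
Qed.

Lemma hat_lambda_mu_eq_half mu : 0 < mu < 1/2 -> hat_lambda_mu xi eta mu = Finite (1/2).
Proof.
  intros Hmu. apply Rbar_sup0_eq; [lra | |].
  - intros l Hl. apply lambda_set_le_half. eapply hat_lambda_mu_set_lambda_set; exact Hl.
  - intros l Hl. apply hat_lambda_mu_set_lt_half; lra.
Qed.

Lemma lambda_min_is_half : lambda_min_is xi eta (Finite (1/2)).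
Proof.
  split.
  - intros w [mu [Hmu [Hlt ->]]]. rewrite lambda_eq_half in Hlt. simpl in Hlt.
    rewrite hat_lambda_mu_eq_half by lra. simpl. lra.
  - intros u Hu. apply (Hu (Finite (1/2))). exists (1/4). rewrite lambda_eq_half.
    split; [lra|]. split; [simpl; lra|]. symmetry. apply hat_lambda_mu_eq_half. lra.
Qed.

End ExponentHalf.

(** * Null sets *)

Record rect := Rect { xlo : R; xhi : R; ylo : R; yhi : R }.

Definition rect_area (r : rect) : R := (xhi r - xlo r) * (yhi r - ylo r).
Definition rect_wf (r : rect) : Prop := xlo r <= xhi r /\ ylo r <= yhi r.
Definition in_rect (r : rect) (x y : R) : Prop := xlo r <= x <= xhi r /\ ylo r <= y <= yhi r.
Definition rect0 : rect := Rect 0 0 0 0.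

Fixpoint total_area (L : list rect) : R :=
  match L with nil => 0 | r :: L => rect_area r + total_area L end.

Lemma total_area_app L1 L2 : total_area (L1 ++ L2) = total_area L1 + total_area L2.
Proof. induction L1 as [|r L1 IH]; simpl; [ring | rewrite IH; ring]. Qed.

Lemma total_area_nonneg L : (forall r, In r L -> rect_wf r) -> 0 <= total_area L.
Proof.
  induction L as [|r L IH]; intros Hwf; simpl; [lra|].
  destruct (Hwf r (in_eq r L)).
  assert (0 <= total_area L) by (apply IH; intros; apply Hwf, in_cons; auto).
  unfold rect_area. nra.
Qed.

Lemma sum_area_nth_le L M : (forall r, In r L -> rect_wf r) ->
  sum_f_R0 (fun k => rect_area (nth k L rect0)) M <= total_area L.
Proof.
  revert M. induction L as [|r L IH]; intros M Hwf.
  - rewrite (sum_eq _ (fun _ => 0)) by (intros [|k] _; unfold rect_area; simpl; ring).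
    simpl. induction M as [|M IHM]; simpl; lra.
  - assert (HL : forall r', In r' L -> rect_wf r') by (intros; apply Hwf, in_cons; auto).
    cbn [total_area]. destruct M as [|M].
    + cbn. pose proof (total_area_nonneg L HL). lra.
    + rewrite decomp_sum by lia. cbn [pred nth]. pose proof (IH M HL). lra.
Qed.

Lemma total_area_map_le {A} (g : A -> rect) l c : (forall x, In x l -> rect_area (g x) <= c) ->
  total_area (map g l) <= INR (length l) * c.
Proof.
  induction l as [|a l IH]; intros H; simpl map; simpl total_area; [simpl; lra|].
  rewrite length_cons, S_INR. pose proof (H a (in_eq a l)).
  assert (total_area (map g l) <= INR (length l) * c) by (apply IH; intros; apply H, in_cons; auto).
  lra.
Qed.

Lemma total_area_flat_map_le {A} (f : A -> list rect) l c :
  (forall x, In x l -> total_area (f x) <= c) -> total_area (flat_map f l) <= INR (length l) * c.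
Proof.
  induction l as [|a l IH]; intros H; simpl flat_map; [simpl; lra|].
  rewrite total_area_app, length_cons, S_INR. pose proof (H a (in_eq a l)).
  assert (total_area (flat_map f l) <= INR (length l) * c)
    by (apply IH; intros; apply H, in_cons; auto).
  lra.
Qed.

Section RectSequence.
Variable F : nat -> list rect.

(* Padding each list with [rect0] makes the [k]-th prefix longer than [k]. *)
Let F' (i : nat) : list rect := F i ++ rect0 :: nil.

Fixpoint cover_prefix (M : nat) : list rect :=
  match M with O => F' 0 | S M => cover_prefix M ++ F' (S M) end.

Lemma cover_prefix_length M : (M < length (cover_prefix M))%nat.
Proof. induction M; simpl; unfold F'; rewrite ?length_app; simpl; lia. Qed.

Lemma cover_prefix_app k K : (k <= K)%nat -> exists t, cover_prefix K = cover_prefix k ++ t.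
Proof.
  induction 1 as [|K _ [t Ht]]; [exists nil; now rewrite app_nil_r|].
  exists (t ++ F' (S K)). simpl. rewrite Ht, app_assoc. reflexivity.
Qed.

Lemma nth_cover_prefix p k K : (p < length (cover_prefix k))%nat -> (k <= K)%nat ->
  nth p (cover_prefix K) rect0 = nth p (cover_prefix k) rect0.
Proof.
  intros Hp HkK. destruct (cover_prefix_app k K HkK) as [t ->]. apply app_nth1, Hp.
Qed.

Lemma total_area_cover_prefix M :
  total_area (cover_prefix M) = sum_f_R0 (fun i => total_area (F i)) M.
Proof.
  assert (HF : forall i, total_area (F' i) = total_area (F i)).
  { intros i. unfold F'. rewrite total_area_app. simpl. unfold rect_area. simpl. ring. }
  induction M; simpl; [apply HF|]. rewrite total_area_app, IHM, HF. reflexivity.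
Qed.

Lemma in_cover_prefix i r : In r (F i) -> In r (cover_prefix i).
Proof.
  intros H. assert (H' : In r (F' i)) by (apply in_or_app; auto).
  destruct i; simpl; [exact H' | apply in_or_app; auto].
Qed.

Hypothesis F_wf : forall i r, In r (F i) -> rect_wf r.

Lemma cover_prefix_wf M r : In r (cover_prefix M) -> rect_wf r.
Proof.
  assert (HF : forall i, In r (F' i) -> rect_wf r).
  { intros i H. apply in_app_or in H as [H|[<-|[]]]; [eapply F_wf; eauto|].
    unfold rect_wf; simpl; lra. }
  induction M; simpl; [apply HF|]. intros H. apply in_app_or in H as [H|H]; eauto.
Qed.

End RectSequence.

Lemma null2_of_rect_lists (N : R -> R -> Prop) :
  (forall eps, 0 < eps -> exists F : nat -> list rect,
     (forall i r, In r (F i) -> rect_wf r) /\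
     (forall x y, N x y -> exists i r, In r (F i) /\ in_rect r x y) /\
     (forall M, sum_f_R0 (fun i => total_area (F i)) M <= eps)) -> null2 N.
Proof.
  intros H eps Heps. destruct (H eps Heps) as [F [Hwf [Hcov Hsum]]].
  set (s := fun k => nth k (cover_prefix F k) rect0).
  assert (Hs : forall k K, (k <= K)%nat -> s k = nth k (cover_prefix F K) rect0).
  { intros k K HkK. unfold s. symmetry.
    apply nth_cover_prefix; [apply cover_prefix_length | exact HkK]. }
  exists (fun k => xlo (s k)), (fun k => xhi (s k)), (fun k => ylo (s k)), (fun k => yhi (s k)).
  split; [|split].
  - intros k. apply (cover_prefix_wf F Hwf k). unfold s. apply nth_In, cover_prefix_length.
  - intros x y Hxy. destruct (Hcov x y Hxy) as [i [r [Hr Hin]]].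
    destruct (In_nth _ r rect0 (in_cover_prefix F i r Hr)) as [p [Hp Hnth]].
    exists p. replace (s p) with r; [exact Hin|].
    destruct (Nat.le_ge_cases p i) as [Hpi|Hip].
    + rewrite (Hs p i Hpi). symmetry. exact Hnth.
    + unfold s. rewrite (nth_cover_prefix F p i p Hp Hip). symmetry. exact Hnth.
  - intros M. change (sum_f_R0 (fun k => rect_area (s k)) M <= eps).
    rewrite (sum_eq _ (fun k => rect_area (nth k (cover_prefix F M) rect0)))
      by (intros k Hk; rewrite (Hs k M Hk); reflexivity).
    eapply Rle_trans; [apply sum_area_nth_le; apply cover_prefix_wf, Hwf|].
    rewrite total_area_cover_prefix. apply Hsum.
Qed.

(** * Very well approximable pairs *)

Lemma dist_approx_opp xi eta a b c : dist_approx xi eta (-a) (-b) (-c) = dist_approx xi eta a b c.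
Proof.
  unfold dist_approx. rewrite !opp_IZR.
  replace (- IZR a * xi - - IZR b) with (- (IZR a * xi - IZR b)) by ring.
  replace (- IZR a * eta - - IZR c) with (- (IZR a * eta - IZR c)) by ring.
  rewrite !Rabs_Ropp. reflexivity.
Qed.

Lemma dist_approx_scale xi eta (t : nat) a b c :
  dist_approx xi eta (Z.of_nat t * a) (Z.of_nat t * b) (Z.of_nat t * c)
  = INR t * dist_approx xi eta a b c.
Proof.
  unfold dist_approx. rewrite !mult_IZR, <- !INR_IZR_INZ.
  replace (INR t * IZR a * xi - INR t * IZR b) with (INR t * (IZR a * xi - IZR b)) by ring.
  replace (INR t * IZR a * eta - INR t * IZR c) with (INR t * (IZR a * eta - IZR c)) by ring.
  rewrite !Rabs_mult, (Rabs_pos_eq (INR t)) by apply pos_INR.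
  apply RmaxRmult, pos_INR.
Qed.

Lemma lambda_set_nat_solution xi eta l : lambda_set xi eta l -> forall X0, exists X, X0 <= X /\
  exists (y0 : nat) (y1 y2 : Z), 1 <= INR y0 <= X /\
    dist_approx xi eta (Z.of_nat y0) y1 y2 <= Rpower X (- l).
Proof.
  intros [_ Hl] X0. destruct (Hl X0) as [X [HX [z0 [z1 [z2 [Hz0 Hd]]]]]].
  exists X. split; [exact HX|].
  destruct (Z_le_gt_dec 0 z0) as [Hs|Hs].
  - exists (Z.to_nat z0), z1, z2. rewrite Z2Nat.id, INR_IZR_INZ, Z2Nat.id by exact Hs.
    rewrite Rabs_pos_eq in Hz0 by (apply IZR_le; exact Hs). auto.
  - exists (Z.to_nat (- z0)), (- z1)%Z, (- z2)%Z.
    rewrite Z2Nat.id, INR_IZR_INZ, Z2Nat.id, dist_approx_opp by lia.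
    rewrite Rabs_left in Hz0 by (apply IZR_lt; lia). rewrite opp_IZR. auto.
Qed.

(* Small denominators are multiplied by [Q]; this costs nothing once [X >= Q^6]. *)
Lemma lambda_set_large_denominator xi eta l : 1/4 <= l -> lambda_set xi eta l ->
  forall Q : nat, (1 <= Q)%nat ->
  exists (x0 : nat) (x1 x2 : Z), (Q <= x0)%nat /\
    dist_approx xi eta (Z.of_nat x0) x1 x2 <= Rpower (INR x0) (- l).
Proof.
  intros Hl Hlam Q HQ. set (q := INR Q).
  assert (Hq : 1 <= q) by (unfold q; apply (le_INR 1); exact HQ).
  destruct (lambda_set_nat_solution xi eta l Hlam (q ^ 6))
    as [X [HX [y0 [y1 [y2 [[Hy1 HyX] Hd]]]]]].
  destruct (le_lt_dec Q y0) as [HQy|HQy].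
  - exists y0, y1, y2. split; [exact HQy|]. eapply Rle_trans; [exact Hd|].
    apply Rpower_Ropp_le_base; lra.
  - exists (Q * y0)%nat, (Z.of_nat Q * y1)%Z, (Z.of_nat Q * y2)%Z.
    split; [destruct y0; [simpl in Hy1; lra | nia]|].
    rewrite Nat2Z.inj_mul, dist_approx_scale, mult_INR. fold q.
    assert (Hy0Q : INR y0 <= q) by (unfold q; apply le_INR; lia).
    assert (H6 : Rpower X (- l) <= Rpower q (- (6 * l))).
    { replace (- (6 * l)) with (INR 6 * - l) by (simpl; ring).
      rewrite <- Rpower_mult, Rpower_pow by lra. apply Rpower_Ropp_le_base; [|lra].
      split; [apply pow_lt; lra | exact HX]. }
    assert (H2 : Rpower q (- (2 * l)) <= Rpower (q * INR y0) (- l)).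
    { replace (- (2 * l)) with (INR 2 * - l) by (simpl; ring).
      rewrite <- Rpower_mult, Rpower_pow by lra. apply Rpower_Ropp_le_base; [|lra].
      split; [apply Rmult_lt_0_compat; lra | simpl; nra]. }
    assert (Hq6 : q * Rpower q (- (6 * l)) <= Rpower q (- (2 * l))).
    { rewrite <- (Rpower_1 q) at 1 by lra. rewrite <- Rpower_plus. apply Rle_Rpower; lra. }
    apply Rle_trans with (q * Rpower X (- l)); [apply Rmult_le_compat_l; lra|].
    pose proof (Rmult_le_compat_l q _ _ ltac:(lra) H6). lra.
Qed.

Lemma nat_pow_bracket (B J x0 : nat) : (2 <= B)%nat -> (B ^ J <= x0)%nat ->
  exists j, (J <= j)%nat /\ (B ^ j <= x0 < B ^ S j)%nat.
Proof.
  intros HB HJ.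
  assert (Hind : forall k, (x0 < B ^ (J + k))%nat ->
                  exists j, (J <= j)%nat /\ (B ^ j <= x0 < B ^ S j)%nat).
  { induction k as [|k IH]; intros Hk; [rewrite Nat.add_0_r in Hk; lia|].
    destruct (lt_dec x0 (B ^ (J + k))) as [H|H]; [exact (IH H)|].
    exists (J + k)%nat. rewrite <- Nat.add_succ_r. split; lia. }
  apply (Hind x0). eapply Nat.lt_le_trans; [apply (Nat.pow_gt_lin_r B x0); lia|].
  apply Nat.pow_le_mono_r; lia.
Qed.

Definition lam (n : nat) : R := 1/2 + / (2 * INR (n + 2)).

(* Denominators [x0] in [[base n ^ j, base n ^ S j)] approximate with error at most
   [radius n j = (base n ^ j) ^ (- lam n)]; points with [|xi|, |eta| <= 2 ^ j] need
   numerators of size at most [height n j]. *)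
Definition base (n : nat) : nat := 16 ^ (n + 2).
Definition radius (n j : nat) : R := / 4 ^ ((n + 3) * j).
Definition height (n j : nat) : nat := base n ^ S j * 2 ^ j + 1.
Definition zrange (W : nat) : list Z :=
  map (fun k => (Z.of_nat k - Z.of_nat W)%Z) (seq 0 (2 * W + 1)).
Definition approx_rect (r : R) (x0 : nat) (x1 x2 : Z) : rect :=
  Rect ((IZR x1 - r) / INR x0) ((IZR x1 + r) / INR x0)
       ((IZR x2 - r) / INR x0) ((IZR x2 + r) / INR x0).
Definition block_rects (n j : nat) : list rect :=
  flat_map (fun x0 => flat_map (fun x1 => map (approx_rect (radius n j) x0 x1)
                                              (zrange (height n j)))
                               (zrange (height n j)))
           (seq (base n ^ j) (base n ^ S j - base n ^ j)).

Lemma lam_gt_half n : 1/2 < lam n.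
Proof.
  unfold lam. assert (0 < INR (n + 2)) by (apply lt_0_INR; lia).
  assert (0 < / (2 * INR (n + 2))) by (apply Rinv_0_lt_compat; lra). lra.
Qed.

Lemma exists_lam_le l : 1/2 < l -> exists n, lam n <= l.
Proof.
  intros Hl. destruct (INR_unbounded (/ (2 * (l - 1/2)))) as [n Hn].
  exists n. unfold lam. rewrite plus_INR. replace (INR 2) with 2 by (simpl; ring).
  assert (Hpos : 0 < / (2 * (l - 1/2))) by (apply Rinv_0_lt_compat; lra).
  assert (E : l - 1/2 = / (2 * / (2 * (l - 1/2)))) by (field; lra).
  assert (/ (2 * (INR n + 2)) <= / (2 * / (2 * (l - 1/2)))) by (apply Rinv_le_contravar; lra).
  lra.
Qed.

Lemma base_ge2 n : (2 <= base n)%nat.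
Proof.
  unfold base. pose proof (Nat.pow_le_mono_r 16 1 (n + 2) ltac:(lia) ltac:(lia)).
  simpl in *. lia.
Qed.

Lemma base_pow_pos n j : (0 < base n ^ j)%nat.
Proof. apply Nat.neq_0_lt_0, Nat.pow_nonzero. pose proof (base_ge2 n). lia. Qed.

Lemma INR_base_pow n j : INR (base n ^ j) = 2 ^ (4 * (n + 2) * j).
Proof.
  unfold base. rewrite !pow_INR. replace (INR 16) with (2 ^ 4) by (simpl; ring).
  rewrite <- !pow_mult. f_equal. lia.
Qed.

Lemma radius_pos n j : 0 < radius n j.
Proof. apply Rinv_0_lt_compat, pow_lt. lra. Qed.

Lemma radius_le1 n j : radius n j <= 1.
Proof.
  unfold radius. rewrite <- Rinv_1. apply Rinv_le_contravar; [lra | apply pow_R1_Rle; lra].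
Qed.

Lemma Rpower_lam_le_radius n j (x0 : nat) : (base n ^ j <= x0)%nat ->
  Rpower (INR x0) (- lam n) <= radius n j.
Proof.
  intros Hx0. assert (HP : 0 < INR (base n ^ j)) by apply lt_0_INR, base_pow_pos.
  eapply Rle_trans.
  - apply Rpower_Ropp_le_base; [split; [exact HP | apply le_INR, Hx0]|].
    pose proof (lam_gt_half n). lra.
  - rewrite INR_base_pow, <- Rpower_pow, Rpower_mult by lra.
    unfold radius. replace 4 with (2 ^ 2) by ring.
    rewrite <- pow_mult, <- Rpower_pow, <- Rpower_Ropp by lra.
    right. f_equal. unfold lam. rewrite !mult_INR, !plus_INR. simpl.
    field. pose proof (pos_INR n). lra.
Qed.

Lemma Rabs_le_inv x r : Rabs x <= r -> - r <= x <= r.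
Proof.
  intros H. pose proof (Rle_abs x). pose proof (Rle_abs (- x)). rewrite Rabs_Ropp in *. lra.
Qed.

Lemma in_zrange (W : nat) (z : Z) : (- Z.of_nat W <= z <= Z.of_nat W)%Z -> In z (zrange W).
Proof.
  intros H. apply in_map_iff. exists (Z.to_nat (z + Z.of_nat W)).
  split; [lia | apply in_seq; lia].
Qed.

Lemma length_zrange W : length (zrange W) = (2 * W + 1)%nat.
Proof. unfold zrange. rewrite length_map, length_seq. reflexivity. Qed.

Lemma numerator_in_zrange n j (x0 : nat) (x1 : Z) (z : R) :
  (x0 < base n ^ S j)%nat -> Rabs z <= 2 ^ j ->
  Rabs (IZR (Z.of_nat x0) * z - IZR x1) <= 1 -> In x1 (zrange (height n j)).
Proof.
  intros Hx0 Hz Hd. apply in_zrange. rewrite <- INR_IZR_INZ in Hd.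
  assert (Hh : INR x0 * Rabs z + 1 <= INR (height n j)).
  { unfold height. rewrite plus_INR, mult_INR, (pow_INR 2 j).
    replace (INR 2) with 2 by (simpl; ring). simpl (INR 1).
    assert (INR x0 <= INR (base n ^ S j)) by (apply le_INR; lia).
    pose proof (Rabs_pos z). pose proof (pos_INR x0). nra. }
  assert (Hx1 : Rabs (IZR x1) <= INR (height n j)).
  { replace (IZR x1) with (INR x0 * z - (INR x0 * z - IZR x1)) by ring.
    eapply Rle_trans; [apply Rabs_triang|].
    rewrite Rabs_Ropp, Rabs_mult, (Rabs_pos_eq (INR x0)) by apply pos_INR. lra. }
  rewrite INR_IZR_INZ in Hx1. apply Rabs_le_inv in Hx1 as [H1 H2].
  split; apply le_IZR; [rewrite opp_IZR|]; lra.
Qed.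

Lemma approx_rect_wf r (x0 : nat) x1 x2 :
  0 <= r -> (0 < x0)%nat -> rect_wf (approx_rect r x0 x1 x2).
Proof.
  intros Hr Hx0. assert (0 < / INR x0) by apply Rinv_0_lt_compat, lt_0_INR, Hx0.
  unfold rect_wf, approx_rect; simpl. unfold Rdiv. split; apply Rmult_le_compat_r; lra.
Qed.

Lemma in_approx_rect r (x0 : nat) x1 x2 xi eta : (0 < x0)%nat ->
  dist_approx xi eta (Z.of_nat x0) x1 x2 <= r -> in_rect (approx_rect r x0 x1 x2) xi eta.
Proof.
  intros Hx0 Hd. assert (HP : 0 < INR x0) by apply lt_0_INR, Hx0.
  pose proof (Rle_trans _ _ _ (Rmax_l _ _) Hd) as D1.
  pose proof (Rle_trans _ _ _ (Rmax_r _ _) Hd) as D2.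
  rewrite <- INR_IZR_INZ in D1, D2. apply Rabs_le_inv in D1, D2.
  unfold in_rect, approx_rect; simpl.
  repeat split; apply Rmult_le_reg_r with (INR x0); trivial; unfold Rdiv;
    rewrite ?Rmult_assoc, ?Rinv_l, ?Rmult_1_r by lra; lra.
Qed.

Lemma in_block_rects n j (x0 : nat) x1 x2 xi eta : (base n ^ j <= x0 < base n ^ S j)%nat ->
  Rabs xi <= 2 ^ j -> Rabs eta <= 2 ^ j ->
  dist_approx xi eta (Z.of_nat x0) x1 x2 <= Rpower (INR x0) (- lam n) ->
  exists r, In r (block_rects n j) /\ in_rect r xi eta.
Proof.
  intros Hx0 Hxi Heta Hd.
  assert (Hdr : dist_approx xi eta (Z.of_nat x0) x1 x2 <= radius n j)
    by (eapply Rle_trans; [exact Hd | apply Rpower_lam_le_radius; lia]).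
  assert (Hd1 : dist_approx xi eta (Z.of_nat x0) x1 x2 <= 1) by (pose proof (radius_le1 n j); lra).
  exists (approx_rect (radius n j) x0 x1 x2). split.
  - apply in_flat_map. exists x0. split; [apply in_seq; lia|].
    apply in_flat_map. exists x1. split.
    + apply (numerator_in_zrange n j x0 x1 xi); [lia | exact Hxi |].
      eapply Rle_trans; [apply Rmax_l | exact Hd1].
    + apply in_map, (numerator_in_zrange n j x0 x2 eta); [lia | exact Heta |].
      eapply Rle_trans; [apply Rmax_r | exact Hd1].
  - apply in_approx_rect; [pose proof (base_pow_pos n j); lia | exact Hdr].
Qed.

Lemma block_rects_wf n j r : In r (block_rects n j) -> rect_wf r.
Proof.
  intros H. apply in_flat_map in H as [x0 [Hx0 H]]. apply in_flat_map in H as [x1 [_ H]].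
  apply in_map_iff in H as [x2 [<- _]]. apply in_seq in Hx0.
  apply approx_rect_wf; [apply Rlt_le, radius_pos | pose proof (base_pow_pos n j); lia].
Qed.

Lemma total_area_block_rects n j : total_area (block_rects n j) <= 100 * INR (base n) ^ 3 / 4 ^ j.
Proof.
  set (b := INR (base n)). set (P := INR (base n ^ j)). set (f := 2 ^ j). set (r := radius n j).
  set (h := INR (2 * height n j + 1)).
  assert (Hb : 2 <= b) by (unfold b; apply (le_INR 2), base_ge2).
  assert (HP : 1 <= P) by (unfold P; apply (le_INR 1), base_pow_pos).
  assert (Hf : 1 <= f) by (unfold f; apply pow_R1_Rle; lra).
  assert (Hr : 0 < r) by apply radius_pos.
  assert (HbP : INR (base n ^ S j) = b * P) by (unfold b, P; rewrite !pow_INR; simpl; ring).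
  assert (Hh : h = 2 * (b * P * f) + 3).
  { unfold h, height. rewrite plus_INR, mult_INR, plus_INR, mult_INR, HbP, (pow_INR 2 j).
    replace (INR 2) with 2 by (simpl; ring). unfold f. simpl. ring. }
  (* [r^2 P f^4 = 1] is how the exponent [lam n > 1/2] beats the count of rectangles. *)
  assert (Hrr : r * r * P * f ^ 4 = 1).
  { unfold r, P, f, radius. rewrite INR_base_pow, <- pow_mult.
    replace (4 ^ ((n + 3) * j)) with (2 ^ (2 * ((n + 3) * j))) by (rewrite pow_mult; f_equal; ring).
    rewrite Rmult_assoc, <- pow_add.
    replace (4 * (n + 2) * j + j * 4)%nat with (2 * ((n + 3) * j) + 2 * ((n + 3) * j))%nat by lia.
    rewrite pow_add. field. apply pow_nonzero; lra. }
  assert (Hcell : forall x0 : nat, P <= INR x0 -> forall x1 x2,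
            rect_area (approx_rect r x0 x1 x2) <= 4 * r * r / (P * P)).
  { intros x0 Hx0 x1 x2. unfold rect_area, approx_rect; simpl.
    replace (((IZR x1 + r) / INR x0 - (IZR x1 - r) / INR x0)
             * ((IZR x2 + r) / INR x0 - (IZR x2 - r) / INR x0))
      with (4 * r * r / (INR x0 * INR x0)) by (field; lra).
    unfold Rdiv. apply Rmult_le_compat_l; [nra|]. apply Rinv_le_contravar; nra. }
  eapply Rle_trans.
  { apply (total_area_flat_map_le _ _ (h * (h * (4 * r * r / (P * P))))).
    intros x0 Hx0. apply in_seq in Hx0.
    unfold h. rewrite <- length_zrange.
    apply total_area_flat_map_le. intros x1 _. apply total_area_map_le. intros x2 _.
    apply Hcell. unfold P. apply le_INR. lia. }
  rewrite length_seq.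
  assert (Hlen : INR (base n ^ S j - base n ^ j) <= b * P) by (rewrite <- HbP; apply le_INR; lia).
  assert (HbPf : 1 <= b * P * f) by (assert (1 <= b * P) by nra; nra).
  assert (Hh5 : h <= 5 * (b * P * f)) by lra.
  assert (Hcell0 : 0 <= 4 * r * r / (P * P))
    by (apply Rmult_le_pos; [nra | apply Rlt_le, Rinv_0_lt_compat; nra]).
  apply Rle_trans with (b * P * (5 * (b * P * f) * (5 * (b * P * f) * (4 * r * r / (P * P))))).
  { pose proof (pos_INR (base n ^ S j - base n ^ j)).
    apply Rmult_le_compat; [lra | nra | lra |].
    apply Rmult_le_compat; [nra | nra | lra |]. apply Rmult_le_compat_r; lra. }
  replace (4 ^ j) with (f * f) by (unfold f; rewrite <- Rpow_mult_distr; f_equal; ring).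
  right. field_simplify_eq; [|split; lra].
  transitivity (100 * b ^ 3 * (r * r * P * f ^ 4)); [ring|]. rewrite Hrr. ring.
Qed.

Lemma INR_le_pow2 k : INR k <= 2 ^ k.
Proof.
  induction k; [simpl; lra|]. rewrite S_INR. simpl (2 ^ S k).
  pose proof (pow_R1_Rle 2 k ltac:(lra)). lra.
Qed.

Lemma sum_inv_pow4 M : sum_f_R0 (fun i => / 4 ^ i) M = 4/3 - / (3 * 4 ^ M).
Proof. induction M; simpl; [field | rewrite IHM; field; apply pow_nonzero; lra]. Qed.

Lemma total_area_flat_map_seq (f : nat -> list rect) c : 0 <= c ->
  (forall m, total_area (f m) <= c / 2 ^ S m) ->
  forall k s, total_area (flat_map f (seq s k)) <= c / 2 ^ s.
Proof.
  intros Hc Hf. induction k as [|k IH]; intros s; simpl.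
  - apply Rmult_le_pos; [lra | apply Rlt_le, Rinv_0_lt_compat, pow_lt; lra].
  - rewrite total_area_app. specialize (Hf s). specialize (IH (S s)). simpl in Hf, IH.
    assert (c / (2 * 2 ^ s) = c / 2 ^ s / 2) by (field; apply pow_nonzero; lra). lra.
Qed.

Lemma exists_block_start n e : 0 < e ->
  exists J : nat, 100 * INR (base n) ^ 3 / 4 ^ J <= e / 2 ^ S n.
Proof.
  intros He. set (K := 100 * INR (base n) ^ 3 * 2 ^ S n / e).
  destruct (INR_unbounded K) as [J HJ]. exists J.
  assert (H4 : INR J <= 4 ^ J).
  { eapply Rle_trans; [apply INR_le_pow2 | apply pow_incr; lra]. }
  assert (H2 : 0 < 2 ^ S n) by (apply pow_lt; lra).
  assert (H4J : 0 < 4 ^ J) by (apply pow_lt; lra).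
  unfold Rdiv. apply Rmult_le_reg_r with (4 ^ J * 2 ^ S n); [nra|].
  replace (100 * INR (base n) ^ 3 * / 4 ^ J * (4 ^ J * 2 ^ S n)) with (K * e)
    by (unfold K; field; lra).
  replace (e * / 2 ^ S n * (4 ^ J * 2 ^ S n)) with (4 ^ J * e) by (field; lra).
  apply Rmult_le_compat_r; lra.
Qed.

Theorem null2_lambda_gt_half : null2 (fun xi eta => exists n, lambda_set xi eta (lam n)).
Proof.
  apply null2_of_rect_lists. intros eps Heps. set (e := eps / 2).
  assert (He : 0 < e) by (unfold e; lra).
  destruct (choice (fun n J => 100 * INR (base n) ^ 3 / 4 ^ J <= e / 2 ^ S n))
    as [J HJ]; [intros n; apply exists_block_start, He|].
  exists (fun i => flat_map (fun n => block_rects n (J n + i)) (seq 0 (S i))).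
  split; [|split].
  - intros i r Hr. apply in_flat_map in Hr as [n [_ Hr]]. eapply block_rects_wf; exact Hr.
  - intros xi eta [n Hn].
    destruct (INR_unbounded (Rmax (Rabs xi) (Rabs eta))) as [k Hk].
    (* A denominator beyond [base n ^ (k + J n + n)] lies in a block [j] with [2 ^ j > |xi|, |eta|],
       and that block occurs in the [(j - J n)]-th list since [n <= j - J n]. *)
    set (Q := (base n ^ (k + J n + n))%nat).
    assert (Hlam : 1/4 <= lam n) by (pose proof (lam_gt_half n); lra).
    destruct (lambda_set_large_denominator xi eta (lam n) Hlam Hn Q)
      as [x0 [x1 [x2 [HQx0 Hd]]]]; [apply base_pow_pos|].
    destruct (nat_pow_bracket (base n) (k + J n + n) x0 (base_ge2 n) HQx0) as [j [Hj Hjx0]].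
    assert (H2j : Rmax (Rabs xi) (Rabs eta) <= 2 ^ j).
    { apply Rle_trans with (INR j); [apply Rlt_le, Rlt_le_trans with (INR k); [exact Hk|] |].
      - apply le_INR. lia.
      - apply INR_le_pow2. }
    destruct (in_block_rects n j x0 x1 x2 xi eta Hjx0
                (Rle_trans _ _ _ (Rmax_l _ _) H2j) (Rle_trans _ _ _ (Rmax_r _ _) H2j) Hd)
      as [r [Hr Hin]].
    exists (j - J n)%nat, r. split; [|exact Hin].
    apply in_flat_map. exists n. split; [apply in_seq; lia|].
    replace (J n + (j - J n))%nat with j by lia. exact Hr.
  - intros M. apply Rle_trans with (sum_f_R0 (fun i => / 4 ^ i * e) M).
    + apply sum_Rle. intros i _.
      replace (/ 4 ^ i * e) with ((/ 4 ^ i * e) / 2 ^ 0) by (simpl; field; apply pow_nonzero; lra).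
      apply total_area_flat_map_seq.
      * apply Rmult_le_pos; [apply Rlt_le, Rinv_0_lt_compat, pow_lt | ]; lra.
      * intros m. eapply Rle_trans; [apply total_area_block_rects|]. rewrite pow_add.
        replace (100 * INR (base m) ^ 3 / (4 ^ J m * 4 ^ i))
          with (/ 4 ^ i * (100 * INR (base m) ^ 3 / 4 ^ J m))
          by (field; split; apply pow_nonzero; lra).
        replace (/ 4 ^ i * e / 2 ^ S m) with (/ 4 ^ i * (e / 2 ^ S m))
          by (field; split; apply pow_nonzero; lra).
        apply Rmult_le_compat_l; [apply Rlt_le, Rinv_0_lt_compat, pow_lt; lra | apply HJ].
    + rewrite <- scal_sum, sum_inv_pow4.
      assert (0 < / (3 * 4 ^ M)) by (apply Rinv_0_lt_compat; pose proof (pow_lt 4 M); lra).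
      unfold e. nra.
Qed.

Theorem theorem1 :
  exists N : R -> R -> Prop, null2 N /\
    forall xi eta : R, ~ N xi eta -> lambda_min_is xi eta (Finite (1/2)).
Proof.
  exists (fun xi eta => exists n, lambda_set xi eta (lam n)).
  split; [exact null2_lambda_gt_half|]. intros xi eta HN.
  apply lambda_min_is_half. intros l Hl. apply Rnot_lt_le. intros Hhalf.
  destruct (exists_lam_le l Hhalf) as [n Hn]. apply HN. exists n.
  eapply lambda_set_antimono; [|exact Hl]. pose proof (lam_gt_half n). lra.
Qed.
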